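(* Let $(\mathbf{k},\phi)$ be a difference field of characteristic zero such that $\mathbf{k}$ is a real field and its field of constants $C:=\mathbf{k}^{\phi}$ is real closed. Let $A\in \mathrm{GL}_n(\mathbf{k})$ and let $(R,\phi)$ be a Picard-Vessiot extension for $\phi Y=AY$ over $(\mathbf{k},\phi)$. Assume that $R\neq R[i]$, i.e. there is no $x\in R$ with $x^2+1=0$. Then $(R[i],\phi)$ is a Picard-Vessiot extension for $\phi Y=AY$ over $(\mathbf{k}[i],\phi)$.
   Context: A difference ring $(R,\phi)$ is a ring $R$ with a ring automorphism $\phi$; a difference ideal is an ideal stable under $\phi$; $(R,\phi)$ is simple if its only difference ideals are $(0)$ and $R$. A difference ring extension of $(\mathbf{k},\phi)$ is a ring extension with an automorphism restricting to $\phi$ on $\mathbf{k}$. A field is real if $0$ is not a sum of squares of nonzero elements; it is real closed if it has no proper real algebraic extension. A Picard-Vessiot extension for $\phi Y=AY$ over $(\mathbf{k},\phi)$ is a difference ring extension $(R,\phi)$ of $(\mathbf{k},\phi)$ such that (1) there exists $U\in\mathrm{GL}_n(R)$ with $\phi(U)=AU$; (2) $R$ is generated as a $\mathbf{k}$-algebra by the entries of $U$ and $\det(U)^{-1}$; (3) $(R,\phi)$ is a simple difference ring. For a difference ring $R$ with no element $x$ satisfying $x^2+1=0$, $R[i]:=R[X]/(X^2+1)$, with $\phi$ extended by $\phi(i)=i$; if $R$ contains such an $x$, the convention is $R[i]=R$. In particular $\mathbf{k}[i]$ is defined this way. *)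

From HB Require Import structures.
From mathcomp Require Import all_boot all_order all_algebra.
From mathcomp Require Import ring.
Set Implicit Arguments.
Unset Strict Implicit.
Unset Printing Implicit Defensive.
Import Order.TTheory GRing.Theory Num.Theory.
Local Open Scope ring_scope.

(* R[i] := R[X]/(X^2+1), represented concretely by its R-basis {1, i}: *)
(* an element a + b i is the pair (a, b); the multiplication is the    *)
(* one induced by X^2 = -1.                                            *)
Record cplx (R : Type) := Cplx { cre : R; cim : R }.

Definition cplx_to_pair (R : Type) (x : cplx R) : R * R := (cre x, cim x).
Definition pair_to_cplx (R : Type) (p : R * R) : cplx R := Cplx p.1 p.2.
Lemma cplx_pairK (R : Type) : cancel (@cplx_to_pair R) (@pair_to_cplx R).
Proof. by case. Qed.

HB.instance Definition _ (R : eqType) :=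
  Equality.copy (cplx R) (can_type (@cplx_pairK R)).
HB.instance Definition _ (R : choiceType) :=
  Choice.copy (cplx R) (can_type (@cplx_pairK R)).

Definition cplx0 (R : zmodType) : cplx R := Cplx 0 0.
Definition cplx_opp (R : zmodType) (x : cplx R) := Cplx (- cre x) (- cim x).
Definition cplx_add (R : zmodType) (x y : cplx R) :=
  Cplx (cre x + cre y) (cim x + cim y).

Lemma cplx_addA (R : zmodType) : associative (@cplx_add R).
Proof. by move=> [a b] [c d] [e f]; rewrite /cplx_add /= !addrA. Qed.
Lemma cplx_addC (R : zmodType) : commutative (@cplx_add R).
Proof. by move=> [a b] [c d]; rewrite /cplx_add /= (addrC a) (addrC b). Qed.
Lemma cplx_add0 (R : zmodType) : left_id (@cplx0 R) (@cplx_add R).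
Proof. by move=> [a b]; rewrite /cplx_add /= !add0r. Qed.
Lemma cplx_addN (R : zmodType) :
  left_inverse (@cplx0 R) (@cplx_opp R) (@cplx_add R).
Proof. by move=> [a b]; rewrite /cplx_add /= !addNr. Qed.

HB.instance Definition _ (R : zmodType) :=
  GRing.isZmodule.Build (cplx R) (@cplx_addA R) (@cplx_addC R)
    (@cplx_add0 R) (@cplx_addN R).

Definition cplx1 (R : comNzRingType) : cplx R := Cplx 1 0.
Definition cplx_mul (R : comNzRingType) (x y : cplx R) :=
  Cplx (cre x * cre y - cim x * cim y) (cre x * cim y + cim x * cre y).

Lemma cplx_mulA (R : comNzRingType) : associative (@cplx_mul R).
Proof. by move=> [a b] [c d] [e f]; rewrite /cplx_mul /=; congr Cplx; ring. Qed.
Lemma cplx_mulC (R : comNzRingType) : commutative (@cplx_mul R).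
Proof. by move=> [a b] [c d]; rewrite /cplx_mul /=; congr Cplx; ring. Qed.
Lemma cplx_mul1 (R : comNzRingType) : left_id (@cplx1 R) (@cplx_mul R).
Proof. by move=> [a b]; rewrite /cplx_mul /=; congr Cplx; ring. Qed.
Lemma cplx_mulDl (R : comNzRingType) :
  left_distributive (@cplx_mul R) (@cplx_add R).
Proof.
by move=> [a b] [c d] [e f]; rewrite /cplx_mul /cplx_add /=; congr Cplx; ring.
Qed.
Lemma cplx1_neq0 (R : comNzRingType) : @cplx1 R != @cplx0 R.
Proof. by apply/eqP => -[] /eqP; rewrite oner_eq0. Qed.

HB.instance Definition _ (R : comNzRingType) :=
  GRing.Zmodule_isComNzRing.Build (cplx R) (@cplx_mulA R) (@cplx_mulC R)
    (@cplx_mul1 R) (@cplx_mulDl R) (@cplx1_neq0 R).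

Definition cplx_of (R : zmodType) (a : R) : cplx R := Cplx a 0.

Definition cplx_map (R S : Type) (f : R -> S) (x : cplx R) : cplx S :=
  Cplx (f (cre x)) (f (cim x)).

Lemma cplx_map_zmod (R S : comNzRingType) (f : {rmorphism R -> S}) :
  zmod_morphism (cplx_map f).
Proof. by move=> [a b] [c d]; rewrite /cplx_map /= !rmorphB. Qed.
Lemma cplx_map_monoid (R S : comNzRingType) (f : {rmorphism R -> S}) :
  monoid_morphism (cplx_map f).
Proof.
split; first by rewrite /cplx_map /= rmorph1 rmorph0.
by move=> [a b] [c d]; rewrite /cplx_map /= !(rmorphB, rmorphD, rmorphM).
Qed.

HB.instance Definition _ (R S : comNzRingType) (f : {rmorphism R -> S}) :=
  GRing.isZmodMorphism.Build (cplx R) (cplx S) (cplx_map f) (cplx_map_zmod f).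
HB.instance Definition _ (R S : comNzRingType) (f : {rmorphism R -> S}) :=
  GRing.isMonoidMorphism.Build (cplx R) (cplx S) (cplx_map f)
    (cplx_map_monoid f).

Definition diff_ideal (S : comNzRingType) (phi : S -> S) (I : S -> Prop) :=
  [/\ I 0,
      (forall x y, I x -> I y -> I (x + y)),
      (forall r x, I x -> I (r * x)) &
      (forall x, I x -> I (phi x))].

Definition simple_diff_ring (S : comNzRingType) (phi : S -> S) :=
  forall I, diff_ideal phi I -> (forall x, I x -> x = 0) \/ (forall x, I x).

(* S is generated, as an algebra over K via iota, by the entries of U and
   det(U)^-1 : every subset of S containing iota(K), the entries of U and
   the inverse of det U, and closed under + and *, is all of S. *)
Definition generated_by (K S : comNzRingType) (iota : K -> S) (n : nat)
    (U : 'M[S]_n) :=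
  forall P : S -> Prop,
    (forall a, P (iota a)) ->
    (forall i j, P (U i j)) ->
    (forall d, d * \det U = 1 -> P d) ->
    (forall x y, P x -> P y -> P (x + y)) ->
    (forall x y, P x -> P y -> P (x * y)) ->
    forall x, P x.

(* (S, phiS) is a Picard-Vessiot extension for phi Y = A Y over (K, phiK),
   the inclusion of K into S being the (injective) ring morphism iota.   *)
Definition is_PV (K S : comNzRingType) (phiK : {rmorphism K -> K})
    (phiS : {rmorphism S -> S}) (iota : {rmorphism K -> S}) (n : nat)
    (A : 'M[K]_n) : Prop :=
  [/\ injective iota,
      bijective phiS,
      (forall a, phiS (iota a) = iota (phiK a)) &
      exists U : 'M[S]_n,
        [/\ (exists d, d * \det U = 1),
            map_mx phiS U = map_mx iota A *m U,
            generated_by iota U &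
            simple_diff_ring phiS]].

Definition real_field (F : fieldType) :=
  forall s : seq F, s != [::] -> all (fun x => x != 0) s ->
    \sum_(x <- s) x ^+ 2 != 0.

(* Adjoining i changes nothing in the Picard-Vessiot data except simplicity: the fundamental
   matrix U still solves the system, its determinant stays invertible, and R[i] is generated
   over k[i] by U, det(U)^-1 and i.  As for simplicity, the real parts of a difference ideal I
   of R[i] form a difference ideal of R.  If it is (0), so is I; if it is (1), then I contains
   some 1 + c i, hence (1 - c i)(1 + c i) = 1 + c^2, which is nonzero because -1 is not a
   square in R.  Then I meets R in a nonzero difference ideal, which must be (1). *)
From HB Require Import structures.
From mathcomp Require Import all_boot all_order all_algebra.
From mathcomp Require Import ring.
Import GRing.Theory Num.Theory.
Local Open Scope ring_scope.

Section ComplexOfRing.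
Variable R : comNzRingType.

Lemma cplx_of_is_zmod_morphism : zmod_morphism (@cplx_of R).
Proof. by move=> a b; rewrite /cplx_of; congr Cplx => /=; ring. Qed.

Lemma cplx_of_is_monoid_morphism : monoid_morphism (@cplx_of R).
Proof. by split=> // a b; rewrite /cplx_of; congr Cplx => /=; ring. Qed.

HB.instance Definition _ :=
  GRing.isZmodMorphism.Build R (cplx R) (@cplx_of R) cplx_of_is_zmod_morphism.
HB.instance Definition _ :=
  GRing.isMonoidMorphism.Build R (cplx R) (@cplx_of R) cplx_of_is_monoid_morphism.

Definition cplx_i : cplx R := Cplx 0 1.

Lemma mul_cplx_of (r a b : R) : cplx_of r * Cplx a b = Cplx (r * a) (r * b).
Proof. by rewrite /cplx_of; congr Cplx => /=; ring. Qed.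

Lemma mul_cplx_i (a b : R) : cplx_i * Cplx a b = Cplx (- b) a.
Proof. by rewrite /cplx_i; congr Cplx => /=; ring. Qed.

Lemma cplx_decomp (a b : R) : Cplx a b = cplx_of a + cplx_i * cplx_of b.
Proof. by rewrite /cplx_of mul_cplx_i; congr Cplx => /=; ring. Qed.

Lemma cplx_norm_real (c : R) : Cplx 1 (- c) * Cplx 1 c = cplx_of (c ^+ 2 + 1).
Proof. by rewrite /cplx_of; congr Cplx => /=; ring. Qed.

End ComplexOfRing.

Arguments cplx_i {R}.

Section ComplexMap.
Context {R S : comNzRingType}.
Implicit Type f : {rmorphism R -> S}.

Lemma cplx_map_of f (a : R) : cplx_map f (cplx_of a) = cplx_of (f a).
Proof. by rewrite /cplx_map /= rmorph0. Qed.

Lemma cplx_map_i f : cplx_map f cplx_i = cplx_i.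
Proof. by rewrite /cplx_map /= rmorph0 rmorph1. Qed.

Lemma map_mx_cplx_of f m n (M : 'M[R]_(m, n)) :
  map_mx (cplx_map f) (map_mx (@cplx_of R) M) = map_mx (@cplx_of S) (map_mx f M).
Proof. by apply/matrixP => i j; rewrite !mxE cplx_map_of. Qed.

End ComplexMap.

Lemma cplx_map_inj (R S : Type) (f : R -> S) :
  injective f -> injective (cplx_map f).
Proof. by move=> injf [a b] [c d] [/injf -> /injf ->]. Qed.

Lemma cplx_map_bij (R : Type) (f : R -> R) :
  bijective f -> bijective (cplx_map f).
Proof.
case=> g fK gK; exists (cplx_map g) => -[a b]; rewrite /cplx_map /=.
- by rewrite !fK.
- by rewrite !gK.
Qed.

Lemma cplx_map_comm (R S : Type) (f : R -> R) (g : S -> S) (h : R -> S) :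
  (forall a, g (h a) = h (f a)) ->
  forall x, cplx_map g (cplx_map h x) = cplx_map h (cplx_map f x).
Proof. by move=> ghf [a b]; rewrite /cplx_map /= !ghf. Qed.

Lemma generated_by_cplx (K S : comNzRingType) (iota : {rmorphism K -> S}) n
    (U : 'M[S]_n) :
  generated_by iota U ->
  generated_by (cplx_map iota) (map_mx (@cplx_of S) U).
Proof.
move=> gen P PK PU Pdet PD PM [a b].
have Preal : forall x, P (cplx_of x).
  apply: gen => [c|i j|d dU|x y|x y].
  - by rewrite -cplx_map_of; apply: PK.
  - by have := PU i j; rewrite mxE.
  - by apply: Pdet; rewrite det_map_mx -rmorphM dU rmorph1.
  - by rewrite rmorphD; apply: PD.
  - by rewrite rmorphM; apply: PM.
rewrite cplx_decomp; apply: PD => //; apply: PM => //.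
by rewrite -(cplx_map_i iota); apply: PK.
Qed.

Section SimpleComplex.
Context {R : comNzRingType} {phi : {rmorphism R -> R}} {I : cplx R -> Prop}.
Hypothesis Iideal : diff_ideal (cplx_map phi) I.

Lemma diff_ideal_cre : diff_ideal phi (fun a => exists b, I (Cplx a b)).
Proof.
case: Iideal => I0 ID IM Iphi; split.
- by exists 0.
- by move=> x y [b Ib] [b' Ib']; exists (b + b'); apply: ID Ib Ib'.
- by move=> r x [b Ib]; exists (r * b); rewrite -mul_cplx_of; apply: IM.
- by move=> x [b Ib]; exists (phi b); apply: Iphi Ib.
Qed.

Lemma diff_ideal_real_part : diff_ideal phi (fun a => I (cplx_of a)).
Proof.
case: Iideal => I0 ID IM Iphi; split.
- by rewrite rmorph0.
- by move=> x y Ix Iy; rewrite rmorphD; apply: ID.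
- by move=> r x Ix; rewrite rmorphM; apply: IM.
- by move=> x Ix; rewrite -cplx_map_of; apply: Iphi.
Qed.

Lemma diff_ideal_cplx_eq0 :
  (forall a, (exists b, I (Cplx a b)) -> a = 0) -> forall x, I x -> x = 0.
Proof.
case: Iideal => _ _ IM _ cre0 [a b] Iab.
have -> : a = 0 by apply: cre0; exists b.
have /eqP : - b = 0 by apply: cre0; exists a; rewrite -mul_cplx_i; apply: IM.
by rewrite oppr_eq0 => /eqP ->.
Qed.

End SimpleComplex.

Lemma simple_diff_ring_cplx (R : comNzRingType) (phi : {rmorphism R -> R}) :
  (forall x : R, x ^+ 2 + 1 != 0) ->
  simple_diff_ring phi -> simple_diff_ring (cplx_map phi).
Proof.
move=> no_sqrtN1 simR I Iideal.
have [cre0|creT] := simR _ (diff_ideal_cre Iideal).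
  by left; apply: diff_ideal_cplx_eq0 Iideal cre0.
have [c I1c] := creT 1.
have [re0|reT] := simR _ (diff_ideal_real_part Iideal).
  have /eqP : c ^+ 2 + 1 = 0.
    by apply: re0; rewrite -cplx_norm_real; case: Iideal => _ _ IM _; apply: IM.
  by rewrite (negPf (no_sqrtN1 c)).
right=> x; rewrite -[x]mulr1.
by case: Iideal => _ _ IM _; apply: IM (reT 1).
Qed.

Theorem lemma2p4 (k : fieldType) (phik : {rmorphism k -> k})
    (C : rcfType) (iC : {rmorphism C -> k})
    (n : nat) (A : 'M[k]_n)
    (R : comNzRingType) (phiR : {rmorphism R -> R}) (iota : {rmorphism k -> R}) :
  bijective phik ->
  [pchar k] =i pred0 ->
  real_field k ->
  (forall x : k, phik x = x <-> exists c : C, x = iC c) ->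
  A \in unitmx ->
  is_PV phik phiR iota A ->
  (forall x : R, x ^+ 2 + 1 != 0) ->
  is_PV (cplx_map phik) (cplx_map phiR) (cplx_map iota) (map_mx (@cplx_of k) A).
Proof.
move=> _ _ _ _ _ [iota_inj phiR_bij phi_iota [U [[d dU] phiU genU simR]]] no_sqrtN1.
split.
- exact: cplx_map_inj.
- exact: cplx_map_bij.
- exact: cplx_map_comm.
exists (map_mx (@cplx_of R) U); split.
- by exists (cplx_of d); rewrite det_map_mx -rmorphM dU rmorph1.
- by rewrite !map_mx_cplx_of phiU map_mxM.
- exact: generated_by_cplx.
- exact: simple_diff_ring_cplx.
Qed.
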